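(* The $\mathfrak{gl}_{1|1}[t]$-module $\mathcal V^S$ is cyclic, generated by $v_1^{\otimes n}=v_1\otimes\cdots\otimes v_1$.
   Context: $\mathbb{C}^{1|1}$ has basis $v_1$ (even), $v_2$ (odd), $|1|=\bar0,|2|=\bar1$; $\mathfrak{gl}_{1|1}$ has basis $e_{ij}$ of parity $|i|+|j|$, acting by $e_{ij}v_r=\delta_{jr}v_i$. $\mathfrak{gl}_{1|1}[t]=\mathfrak{gl}_{1|1}\otimes\mathbb{C}[t]$ with basis $e_{ij}[r]=e_{ij}\otimes t^r$ and pointwise supercommutator. $\mathcal V=(\mathbb{C}^{1|1})^{\otimes n}\otimes\mathbb{C}[z_1,\dots,z_n]$ is a $\mathfrak{gl}_{1|1}[t]$-module via $e_{ij}[r](p\,w_1\otimes\cdots\otimes w_n)=p\sum_{s=1}^n(-1)^{(|w_1|+\cdots+|w_{s-1}|)(|i|+|j|)}z_s^r\,w_1\otimes\cdots\otimes e_{ij}w_s\otimes\cdots\otimes w_n$ for $p\in\mathbb{C}[\boldsymbol z]$ and homogeneous $w_s$. The standard $\mathfrak S_n$-action is $s_i:\boldsymbol f(\dots,z_i,z_{i+1},\dots)\mapsto P^{(i,i+1)}\boldsymbol f(\dots,z_{i+1},z_i,\dots)$ with $P^{(i,i+1)}$ the graded flip of factors $i,i+1$; $\mathcal V^S$ is its invariant subspace, which is a $\mathfrak{gl}_{1|1}[t]$-submodule. *)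

From HB Require Import structures.
From mathcomp Require Import all_boot all_order all_algebra all_fingroup.
From mathcomp Require Import mpoly.
Set Implicit Arguments. Unset Strict Implicit. Unset Printing Implicit Defensive.
Import GRing.Theory.
Local Open Scope ring_scope.

(* Index/parity of the basis of C^{1|1}: a boolean b, with
     false <-> v_1 (even, |1| = 0),  true <-> v_2 (odd, |2| = 1).
   So the parity of v_b is b itself, and |i|+|j| mod 2 is (i (+) j).
   A basis vector v_{b_1} (x) ... (x) v_{b_n} of (C^{1|1})^{(x) n} is indexed by
   b : {ffun 'I_n -> bool}.  An element of V = (C^{1|1})^{(x) n} (x) C[z_1..z_n]
   is its coefficient function  f : {ffun 'I_n -> bool} -> {mpoly C[n]},
   i.e. f = \sum_b f b . v_{b_1} (x) ... (x) v_{b_n}. *)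

Definition basisIdx (n : nat) := {ffun 'I_n -> bool}.
Definition Vsp (C : numClosedFieldType) (n : nat) :=
  {ffun basisIdx n -> {mpoly C[n]}}.

Definition parity_before n (b : basisIdx n) (s : 'I_n) : nat :=
  #|[set k : 'I_n | (k < s)%N && b k]|.

Definition upd n (b : basisIdx n) (s : 'I_n) (x : bool) : basisIdx n :=
  [ffun k => if k == s then x else b k].

(* Action of e_{ij}[r] on V (i, j given as parities/indices, see above):
   e_{ij}[r] (p w_1 (x) ... (x) w_n) =
     p \sum_s (-1)^{(|w_1|+...+|w_{s-1}|)(|i|+|j|)} z_s^r w_1 (x) ... e_{ij} w_s ... w_n,
   with e_{ij} v_r = delta_{jr} v_i.  On coefficient functions this reads
   (e_{ij}[r] f)(b') = \sum_s [b'_s = i] (-1)^{(...)(|i|+|j|)} z_s^r f(b' with b'_s := j). *)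
Definition act (C : numClosedFieldType) n (i j : bool) (r : nat)
  (f : Vsp C n) : Vsp C n :=
  [ffun b' : basisIdx n =>
     \sum_(s < n)
       (if b' s == i then
          ((-1) ^+ (parity_before b' s * (i (+) j)) * 'X_s ^+ r) * f (upd b' s j)
        else 0)].

Definition swapIdx n (p q : 'I_n) (b : basisIdx n) : basisIdx n :=
  [ffun k => b (tperm p q k)].

(* Standard action of the transposition s_p = (p, p+1) (q = p+1):
   s_p : f(.., z_p, z_q, ..) |-> P^{(p,q)} f(.., z_q, z_p, ..),
   with P the graded flip: P (.. w_p (x) w_q ..) = (-1)^{|w_p||w_q|} (.. w_q (x) w_p ..). *)
Definition sact (C : numClosedFieldType) n (p q : 'I_n) (f : Vsp C n) : Vsp C n :=
  [ffun b' : basisIdx n =>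
     (-1) ^+ (b' p && b' q) * msym (tperm p q) (f (swapIdx p q b'))].

(* V^S : invariants under all simple transpositions s_p, p = 1..n-1 *)
Definition symmetric_vec (C : numClosedFieldType) n (f : Vsp C n) : Prop :=
  forall p q : 'I_n, val q = (val p).+1 -> sact p q f = f.

Definition v1tensor (C : numClosedFieldType) n : Vsp C n :=
  [ffun b : basisIdx n => if b == [ffun => false] then 1 else 0].

(* The gl_{1|1}[t]-submodule generated by v, i.e. U(gl_{1|1}[t]) v :
   the smallest C-subspace of V containing v and stable under all e_{ij}[r]. *)
Inductive gen_submod (C : numClosedFieldType) n (v : Vsp C n) : Vsp C n -> Prop :=
  | gen_base : gen_submod v v
  | gen_zero : gen_submod v 0
  | gen_add f g : gen_submod v f -> gen_submod v g -> gen_submod v (f + g)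
  | gen_scale (c : C) f : gen_submod v f -> gen_submod v [ffun b => c *: f b]
  | gen_act (i j : bool) (r : nat) f : gen_submod v f -> gen_submod v (act i j r f).

(* The graded flips extend to an action of the whole symmetric group on V: a
   permutation moves the tensor factors and the variables simultaneously, with
   the Koszul sign of the odd factors it reorders.  The operators e_{ij}[r]
   commute with this action, so everything generated from the invariant vector
   v_1^{(x) n} is invariant.  Conversely, an invariant vector is 1/n! times its
   symmetrization, hence a linear combination of symmetrizations Y(b, z^e) of
   vectors z^e v_b.  Suppose b and e only involve the first u+1 positions, and
   let b', e' be b, e with position u cleared.  Applying e_{x1}[e_u], with x the
   u-th index of b, to Y(b', z^e') turns one v_1 factor at some position t into
   v_x: for each of the n-u positions t >= u the result is +-Y(b, z^e), and for
   t < u it only involves the first u positions.  Induction on u and n-u != 0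
   in characteristic zero conclude. *)
Set Warnings "-notation-overridden -ambiguous-paths -notation-incompatible-prefix".
From Pilot Require Import Defs.
From HB Require Import structures.
From mathcomp Require Import all_boot all_order all_algebra all_fingroup.
From mathcomp Require Import mpoly zify.
Set Implicit Arguments. Unset Strict Implicit. Unset Printing Implicit Defensive.
Import GRing.Theory Num.Theory.
Local Open Scope ring_scope.

Section PositionPermutations.
Variable n : nat.
Implicit Types (p q i j k u t : 'I_n) (s : 'S_n) (b : basisIdx n).

Lemma adjacent_neq p q : val q = (val p).+1 -> p != q.
Proof. by move=> hq; rewrite -(inj_eq val_inj) hq (ltn_eqF (ltnSn _)). Qed.

Lemma adjacent_tperm_ind (P : 'S_n -> Prop) :
  P 1%g -> (forall s s', P s -> P s' -> P (s * s')%g) ->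
  (forall p q, val q = (val p).+1 -> P (tperm p q)) -> forall s, P s.
Proof.
move=> P1 PM Padj.
have Pdist d u t : (t : nat) = (u + d.+1)%N -> P (tperm u t).
  elim: d u t => [|d IH] u t ht; first by apply: Padj; apply: etrans ht (addn1 _).
  have t'_lt : (u + d.+1 < n)%N by move: (ltn_ord t); rewrite ht; lia.
  pose t' := Ordinal t'_lt.
  have -> : tperm u t = (tperm t' t * tperm u t' * tperm t' t)%g.
    rewrite -{1}(tpermV t' t) -mulgA -conjgE tpermJ tpermL tpermD //;
      rewrite -(inj_eq val_inj) /= ?ht; lia.
  have Pt't : P (tperm t' t) by apply: Padj; apply: etrans ht (addnS _ _).
  exact: PM _ _ (PM _ _ Pt't (IH u t' erefl)) Pt't.
have Ptperm u t : P (tperm u t).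
  have [ut|tu|/val_inj->] := ltngtP u t; last by rewrite tperm1.
    by apply: (Pdist (t - u.+1)%N); lia.
  by rewrite tpermC; apply: (Pdist (u - t.+1)%N); lia.
move=> s; have [ts -> _] := prod_tpermP s.
elim: ts => [|x ts IH]; first by rewrite big_nil.
by rewrite big_cons; apply: PM (Ptperm _ _) IH.
Qed.

Definition inverts s (A : {set 'I_n}) : bool :=
  [exists i in A, exists j in A, (i < j)%N && (s j < s i)%N].

Lemma inverts2 s i j : i != j ->
  inverts s [set i; j] = ((i < j)%N != (s i < s j)%N).
Proof.
move=> ij; have sij : s i != s j by rewrite (inj_eq perm_inj).
apply/existsP/idP.
- case=> x /andP[xA /existsP[y /andP[yA /andP[xy syx]]]].
  move: xA yA xy syx; rewrite !inE => /orP[]/eqP-> /orP[]/eqP-> //=;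
    try by rewrite ltnn.
  + by move=> xy syx; rewrite xy ltnNge (ltnW syx).
  + by move=> xy syx; rewrite ltnNge (ltnW xy) syx.
- have [lij|lji|eij] := ltngtP i j.
  + move=> /= sl; exists i; rewrite !inE eqxx /=.
    apply/existsP; exists j; rewrite !inE eqxx orbT lij /=.
    by rewrite ltn_neqAle eq_sym sij leqNgt.
  + move=> /= sl; exists j; rewrite !inE eqxx orbT /=.
    apply/existsP; exists i; rewrite !inE eqxx lji /=.
    by case: (s i < s j)%N sl.
  + by move: ij; rewrite (val_inj eij) eqxx.
Qed.

Lemma invertsM s s' (A : {set 'I_n}) : #|A| == 2 ->
  inverts (s * s')%g A = inverts s A (+) inverts s' (s @: A).
Proof.
case/cards2P=> i [j [ij ->]].
have sij : s i != s j by rewrite (inj_eq perm_inj).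
rewrite imsetU1 imset_set1 !inverts2 // !permM.
by case: (i < j)%N; case: (s i < s j)%N; case: (s' (s i) < s' (s j))%N.
Qed.

Lemma inverts_adjacent_tperm p q i j : val q = (val p).+1 -> i != j ->
  inverts (tperm p q) [set i; j] -> [set i; j] = [set p; q].
Proof.
move=> hq ij; rewrite inverts2 // => hinv.
suff /orP[] : (i == p) && (j == q) || (i == q) && (j == p).
- by case/andP=> /eqP-> /eqP->.
- by case/andP=> /eqP-> /eqP->; rewrite setUC.
move: hinv ij.
case: (tpermP p q i) => [->|->|/eqP ei1 /eqP ei2];
  case: (tpermP p q j) => [->|->|/eqP ej1 /eqP ej2];
  try move: ei1 ei2; try move: ej1 ej2;
  rewrite ?eqxx; repeat rewrite -[(_ == _ :> 'I_n)](inj_eq val_inj); rewrite /= ?hq;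
  try lia; do 2 (case: ltnP => /= ?); lia.
Qed.

Lemma inverts_tperm_below u t i j : (u <= t)%N -> (i <= u)%N -> (j <= u)%N ->
  i != j -> ~~ inverts (tperm u t) [set i; j].
Proof.
move=> ut iu ju ij; rewrite inverts2 // negbK.
move: ij iu ju ut.
case: (tpermP u t i) => [->|->|/eqP ei1 /eqP ei2];
  case: (tpermP u t j) => [->|->|/eqP ej1 /eqP ej2];
  try move: ei1 ei2; try move: ej1 ej2;
  rewrite ?eqxx; repeat rewrite -[(_ == _ :> 'I_n)](inj_eq val_inj); rewrite /=;
  try lia; do 2 (case: ltnP => /= ?); lia.
Qed.

Definition idx_perm b s : basisIdx n := [ffun k => b (s k)].

Lemma idx_permM b s s' : idx_perm (idx_perm b s) s' = idx_perm b (s' * s)%g.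
Proof. by apply/ffunP => k; rewrite !ffunE permM. Qed.

Lemma idx_perm1 b : idx_perm b 1%g = b.
Proof. by apply/ffunP => k; rewrite !ffunE perm1. Qed.

Lemma upd_swapIdx b p q t x :
  upd (swapIdx p q b) t x = swapIdx p q (upd b (tperm p q t) x).
Proof. by apply/ffunP => k; rewrite !ffunE (inj_eq perm_inj). Qed.

Lemma upd_false_tail b u : (forall k, (u < k)%N -> b k = false) ->
  forall k, (u <= k)%N -> upd b u false k = false.
Proof.
move=> bu k uk; rewrite ffunE; case: eqP => // /eqP ku; apply: bu.
by rewrite ltn_neqAle uk andbT eq_sym (inj_eq val_inj).
Qed.

Lemma parity_beforeE b t : parity_before b t = \sum_(k < n | (k < t)%N) (b k : nat).
Proof.
rewrite /parity_before -sum1_card big_mkcond [RHS]big_mkcond /=.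
by apply: eq_bigr => k _; rewrite inE; case: (k < t)%N; case: (b k).
Qed.

Lemma parity_before_adjacent b p q : val q = (val p).+1 ->
  parity_before b q = (parity_before b p + b p)%N.
Proof.
move=> hq; rewrite !parity_beforeE (bigD1 p) /=; last by rewrite hq.
rewrite addnC; congr (_ + _)%N; apply: eq_bigl => k.
by rewrite hq ltnS ltn_neqAle -(inj_eq val_inj) andbC.
Qed.

Lemma parity_before_swapIdx b p q t : val q = (val p).+1 ->
  parity_before (swapIdx p q b) t =
  if t == q then (parity_before b p + b q)%N else parity_before b t.
Proof.
move=> hq; have pq := adjacent_neq hq; rewrite !parity_beforeE.
rewrite (reindex_inj (@perm_inj _ (tperm p q))) /=.
under eq_bigr do rewrite ffunE tpermK.
case: eqP => [->|/eqP tq].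
  rewrite (bigD1 q) /= ?tpermR; last by rewrite hq.
  rewrite addnC; congr (_ + _)%N; apply: eq_bigl => k.
  move: pq; case: (tpermP p q k) => [->|->|/eqP e1 /eqP e2];
  try move: e1 e2; rewrite ?eqxx; repeat rewrite -[(_ == _ :> 'I_n)](inj_eq val_inj);
  rewrite /= ?hq ?ltnn ?ltnSn //=; try lia; do 2 (case: ltnP => /= ?); lia.
apply: eq_bigl => k.
move: pq tq; case: (tpermP p q k) => [->|->|/eqP e1 /eqP e2];
  try move: e1 e2; rewrite ?eqxx; repeat rewrite -[(_ == _ :> 'I_n)](inj_eq val_inj);
  rewrite /= ?hq //=; try lia; do 2 (case: ltnP => /= ?); lia.
Qed.

Lemma parity_before_upd b t x : parity_before (upd b t x) t = parity_before b t.
Proof.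
rewrite !parity_beforeE; apply: eq_bigr => k kt.
by rewrite ffunE -(inj_eq val_inj) (ltn_eqF kt).
Qed.

Lemma parity_before_tail b u t : (forall k, (u <= k)%N -> b k = false) ->
  (u <= t)%N -> parity_before b t = parity_before b u.
Proof.
move=> bu ut; rewrite !parity_beforeE big_mkcond [RHS]big_mkcond /=.
apply: eq_bigr => k _; case: (ltnP k u) => ku; first by rewrite (leq_trans ku ut).
by rewrite bu //; case: ifP.
Qed.

End PositionPermutations.

Lemma signr_odd_eq (R : pzRingType) a b : odd a = odd b -> (-1) ^+ a = (-1) ^+ b :> R.
Proof. by move=> h; rewrite -signr_odd h signr_odd. Qed.

Lemma msymXn (R : nzRingType) n (s : 'S_n) (i : 'I_n) r :
  msym s ('X_i ^+ r : {mpoly R[n]}) = 'X_(s i) ^+ r.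
Proof. by rewrite rmorphXn /= /msym mmapX mmap1U. Qed.

Lemma act_is_linear (C : numClosedFieldType) n i j r : linear (@Defs.act C n i j r).
Proof.
move=> c f g; apply/ffunP => b; rewrite !ffunE scaler_sumr -big_split /=.
apply: eq_bigr => s _; rewrite !ffunE.
by case: ifP => _; rewrite ?scaler0 ?addr0 // mulrDr scalerAr.
Qed.

HB.instance Definition _ (C : numClosedFieldType) n i j r :=
  GRing.isLinear.Build C (Vsp C n) (Vsp C n) _ (@Defs.act C n i j r)
    (act_is_linear i j r).

Section GeneratedSubmodule.
Variables (C : numClosedFieldType) (n : nat) (v : Vsp C n).

Lemma gen_submodZ (c : C) f : gen_submod v f -> gen_submod v (c *: f).
Proof. exact: gen_scale. Qed.

Lemma gen_submodZK (c : C) f : c != 0 -> gen_submod v (c *: f) -> gen_submod v f.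
Proof. by move=> c0 /(gen_submodZ c^-1); rewrite scalerA mulVf ?scale1r. Qed.

Lemma gen_submodB f g : gen_submod v f -> gen_submod v g -> gen_submod v (f - g).
Proof. by move=> Hf Hg; apply: gen_add => //; rewrite -scaleN1r; apply: gen_submodZ. Qed.

Lemma gen_submod_sum I (r : seq I) (P : pred I) (F : I -> Vsp C n) :
  (forall i, P i -> gen_submod v (F i)) -> gen_submod v (\sum_(i <- r | P i) F i).
Proof. by move=> H; apply: big_ind => //; [apply: gen_zero | apply: gen_add]. Qed.

End GeneratedSubmodule.

Section SymmetricGroupAction.
Variables (C : numClosedFieldType) (n : nat).
Implicit Types (f g : Vsp C n) (b c : basisIdx n) (s : 'S_n) (p q k u t : 'I_n).

Definition koszul_sign s c : C :=
  \prod_(A : {set 'I_n})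
     (if [&& #|A| == 2, A \subset [set k | c k] & inverts s A] then -1 else 1).

Lemma koszul_signM s s' c :
  koszul_sign (s * s')%g (idx_perm c s) = koszul_sign s (idx_perm c s) * koszul_sign s' c.
Proof.
rewrite /koszul_sign [X in _ = _ * X](reindex_inj (imset_inj (@perm_inj _ s))).
rewrite -big_split /=; apply: eq_bigr => A _.
have -> : (s @: A \subset [set k | c k]) = (A \subset [set k | idx_perm c s k]).
  apply/subsetP/subsetP => H x xA.
  - by rewrite inE ffunE; have := H _ (imset_f s xA); rewrite inE.
  - by case/imsetP: xA => y yA ->; have := H _ yA; rewrite !inE ffunE.
rewrite card_imset; last exact: perm_inj.
case: (boolP (#|A| == 2)) => //= A2; last by rewrite mulr1.
rewrite invertsM //; case: (A \subset _) => /=; last by rewrite mulr1.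
by case: (inverts s A); case: (inverts s' _); rewrite /= ?mulN1r ?opprK ?mulr1 ?mul1r.
Qed.

Lemma koszul_sign1 c : koszul_sign 1%g c = 1.
Proof.
rewrite /koszul_sign big1 // => A _.
have -> : inverts 1%g A = false.
  apply/negbTE/existsP => [[x /andP[_ /existsP[y /andP[_ /andP[xy]]]]]].
  by rewrite !perm1 ltnNge (ltnW xy).
by rewrite !andbF.
Qed.

Lemma koszul_sign_adjacent p q c : val q = (val p).+1 ->
  koszul_sign (tperm p q) c = if c p && c q then -1 else 1.
Proof.
move=> hq; have pq := adjacent_neq hq.
rewrite /koszul_sign (bigD1 [set p; q]) //= big1 => [|A nA].
  rewrite cards2 pq /= subUset !sub1set !inE inverts2 // tpermL tpermR.
  by rewrite hq ltnSn /= ltnNge leqnSn mulr1; case: (c p && c q).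
case: ifP => // /and3P[/cards2P[i [j [ij eA]]] _ hinv].
by move: hinv nA; rewrite eA => /(inverts_adjacent_tperm hq ij) ->; rewrite eqxx.
Qed.

Lemma koszul_sign_tperm_tail u t c : (u <= t)%N ->
  (forall k, (u < k)%N -> c k = false) -> koszul_sign (tperm u t) c = 1.
Proof.
move=> ut cu; rewrite /koszul_sign big1 // => A _.
case: ifP => // /and3P[/cards2P[i [j [ij ->]]]].
rewrite subUset !sub1set !inE => /andP[ci cj].
have below k : c k -> (k <= u)%N by rewrite leqNgt; apply: contraTN => /cu ->.
by rewrite (negbTE (inverts_tperm_below ut (below _ ci) (below _ cj) ij)).
Qed.

Definition perm_act s f : Vsp C n :=
  [ffun b => koszul_sign s (idx_perm b s) *: msym s (f (idx_perm b s))].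

Lemma perm_act_is_linear s : linear (perm_act s).
Proof.
move=> a f g; apply/ffunP => b.
by rewrite !ffunE msymD msymZ scalerDr !scalerA mulrC.
Qed.

HB.instance Definition _ s :=
  GRing.isLinear.Build C (Vsp C n) (Vsp C n) _ (perm_act s) (perm_act_is_linear s).

Lemma perm_actM s s' f : perm_act s' (perm_act s f) = perm_act (s * s')%g f.
Proof.
apply/ffunP => b; rewrite !ffunE msymZ scalerA idx_permM -msymMm.
by congr (_ *: _); rewrite -idx_permM koszul_signM mulrC.
Qed.

Lemma perm_act1 f : perm_act 1%g f = f.
Proof. by apply/ffunP => b; rewrite !ffunE idx_perm1 koszul_sign1 scale1r msym1m. Qed.

Lemma perm_act_adjacent p q f : val q = (val p).+1 -> perm_act (tperm p q) f = sact p q f.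
Proof.
move=> hq; apply/ffunP => b; rewrite !ffunE koszul_sign_adjacent // !ffunE.
rewrite tpermL tpermR andbC -[idx_perm b _]/(swapIdx p q b).
by case: (b p && b q); rewrite ?scaleN1r ?scale1r ?mulN1r ?mul1r.
Qed.

Lemma symmetric_vec_perm_act f : symmetric_vec f -> forall s, perm_act s f = f.
Proof.
move=> Hf; apply: adjacent_tperm_ind; first exact: perm_act1.
  by move=> s s' Hs Hs'; rewrite -perm_actM Hs Hs'.
by move=> p q hq; rewrite perm_act_adjacent // Hf.
Qed.

(* Acting on factor p or q, e_{ij}[r] changes that factor's parity by i+j and
   its own Koszul sign by the parity of the other flipped factor; the two
   changes of sign cancel. *)
Lemma act_sact i j r p q f : val q = (val p).+1 ->
  Defs.act i j r (sact p q f) = sact p q (Defs.act i j r f).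
Proof.
move=> hq; have pq := adjacent_neq hq.
apply/ffunP => b; rewrite !ffunE raddf_sum mulr_sumr.
rewrite (reindex_inj (@perm_inj _ (tperm p q))) /=.
apply: eq_bigr => s _; rewrite !ffunE.
case: eqP => bi; last by rewrite msym0 mulr0.
rewrite !msymM msymXn rmorphXn rmorphN1 -upd_swapIdx !mulrA.
rewrite (mulrAC _ ('X_ _ ^+ r)); congr (_ * _ * _).
rewrite -!exprD; apply: signr_odd_eq; rewrite parity_before_swapIdx //.
case: (tpermP p q s) bi => [->|->|/eqP e1 /eqP e2] bi.
- rewrite (negbTE pq) eqxx (parity_before_adjacent _ hq) bi !oddD !oddM !oddD.
  by case: (b p); case: (b q) bi => <-; case: j; case: (odd (parity_before b p)).
- rewrite [q == p]eq_sym (negbTE pq) !eqxx !oddD !oddM !oddD.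
  by case: (b q); case: (b p) bi => <-; case: j; case: (odd (parity_before b p)).
- by rewrite [p == s]eq_sym [q == s]eq_sym (negbTE e1) (negbTE e2) addnC.
Qed.

Lemma act_perm_act i j r s f :
  Defs.act i j r (perm_act s f) = perm_act s (Defs.act i j r f).
Proof.
elim/adjacent_tperm_ind: s f => [f|s s' Hs Hs' f|p q hq f].
- by rewrite !perm_act1.
- by rewrite -!perm_actM Hs' Hs.
- by rewrite !perm_act_adjacent // act_sact.
Qed.

Lemma symmetric_vec_v1tensor : symmetric_vec (v1tensor C n).
Proof.
move=> p q hq; apply/ffunP => b; rewrite !ffunE.
have -> : (swapIdx p q b == [ffun => false]) = (b == [ffun => false]).
  apply/eqP/eqP => H; apply/ffunP => k; last by rewrite !ffunE H ffunE.
  by have := congr1 (fun g : basisIdx n => g (tperm p q k)) H; rewrite !ffunE tpermK.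
case: eqP => [->|_]; last by rewrite msym0 mulr0.
by rewrite !ffunE /= expr0 mul1r msym1.
Qed.

Lemma gen_submod_symmetric f : gen_submod (v1tensor C n) f -> symmetric_vec f.
Proof.
elim=> [|| f1 g _ Hf _ Hg | a f1 _ Hf | i j r f1 _ Hf] p q hq.
- exact: symmetric_vec_v1tensor.
- by rewrite -(perm_act_adjacent _ hq) raddf0.
- by rewrite -(perm_act_adjacent _ hq) raddfD /= !(perm_act_adjacent _ hq) Hf ?Hg.
- rewrite -[[ffun b => _]]/(a *: f1) -(perm_act_adjacent _ hq) linearZ /=.
  by rewrite (perm_act_adjacent _ hq) Hf.
- by rewrite -act_sact // Hf.
Qed.

Definition basisv b (P : {mpoly C[n]}) : Vsp C n := [ffun c => if c == b then P else 0].

Lemma basisvZ b (a : C) P : basisv b (a *: P) = a *: basisv b P.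
Proof. by apply/ffunP => c; rewrite !ffunE; case: ifP; rewrite ?scaler0. Qed.

Lemma Vsp_basis_decomposition f :
  f = \sum_b \sum_(m <- msupp (f b)) (f b)@_m *: basisv b 'X_[m].
Proof.
apply/ffunP => c; rewrite sum_ffunE (bigD1 c) //= [X in _ + X]big1 => [|b bc].
  rewrite addr0 sum_ffunE {1}(mpolyE (f c)); apply: eq_bigr => m _.
  by rewrite !ffunE eqxx.
by rewrite sum_ffunE big1 // => m _; rewrite !ffunE eq_sym (negbTE bc) scaler0.
Qed.

Lemma perm_act_basisv s b P :
  perm_act s (basisv b P) = basisv (idx_perm b s^-1) (koszul_sign s b *: msym s P).
Proof.
apply/ffunP => c; rewrite !ffunE.
have -> : (idx_perm c s == b) = (c == idx_perm b s^-1).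
  apply/eqP/eqP => [<-|->]; first by rewrite idx_permM mulVg idx_perm1.
  by rewrite idx_permM mulgV idx_perm1.
by case: eqP => [->|_]; rewrite ?msym0 ?scaler0 // idx_permM mulgV idx_perm1.
Qed.

Lemma act_basisv i j r b P :
  Defs.act i j r (basisv b P) =
  \sum_(t | b t == j)
     basisv (upd b t i) ((-1) ^+ (parity_before b t * (i (+) j)) *: ('X_t ^+ r * P)).
Proof.
apply/ffunP => c; rewrite !ffunE sum_ffunE [RHS]big_mkcond /=.
apply: eq_bigr => t _; rewrite !ffunE.
have [->|ne] := eqVneq c (upd b t i).
  rewrite ffunE !eqxx; case: (eqVneq (b t) j) => bt.
    have -> : upd (upd b t i) t j = b.
      by apply/ffunP => k; rewrite !ffunE; case: eqP => [->|].
    rewrite eqxx parity_before_upd -mulrA -mul_mpolyC.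
    by rewrite rmorphXn rmorphN1.
  have -> : (upd (upd b t i) t j == b) = false.
    by apply/negbTE/eqP => H; move: bt; rewrite -H ffunE eqxx eqxx.
  by rewrite mulr0.
rewrite if_same; case: eqP => ct //; case: eqP => eu; last by rewrite mulr0.
case/eqP: ne; apply/ffunP => k; rewrite ffunE.
by case: eqP => [->|/eqP kt] //; rewrite -eu ffunE (negbTE kt).
Qed.

Definition symmetrize f : Vsp C n := \sum_(s : 'S_n) perm_act s f.

Lemma symmetrize_is_linear : linear symmetrize.
Proof.
move=> a f g; rewrite /symmetrize scaler_sumr -big_split /=.
by apply: eq_bigr => s _; rewrite linearP.
Qed.

HB.instance Definition _ :=
  GRing.isLinear.Build C (Vsp C n) (Vsp C n) _ symmetrize symmetrize_is_linear.

Lemma symmetrize_perm_act s f : symmetrize (perm_act s f) = symmetrize f.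
Proof.
rewrite /symmetrize; under eq_bigr do rewrite perm_actM.
by rewrite [RHS](reindex_inj (mulgI s)).
Qed.

Lemma symmetrize_invariant f : (forall s, perm_act s f = f) ->
  symmetrize f = n`!%:R *: f.
Proof.
move=> Hf; rewrite /symmetrize; under eq_bigr do rewrite Hf.
by rewrite sumr_const card_Sn scaler_nat.
Qed.

Lemma symmetrize_basisv_perm s b P :
  symmetrize (basisv (idx_perm b s^-1) (koszul_sign s b *: msym s P)) =
  symmetrize (basisv b P).
Proof. by rewrite -perm_act_basisv symmetrize_perm_act. Qed.

Lemma act_symmetrize_basisv i j r b P :
  Defs.act i j r (symmetrize (basisv b P)) =
  \sum_(t | b t == j) (-1) ^+ (parity_before b t * (i (+) j)) *:
     symmetrize (basisv (upd b t i) ('X_t ^+ r * P)).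
Proof.
rewrite /symmetrize raddf_sum /=.
under eq_bigr do rewrite act_perm_act act_basisv raddf_sum.
rewrite exchange_big /=; apply: eq_bigr => t _.
by rewrite scaler_sumr; apply: eq_bigr => s _; rewrite basisvZ linearZ.
Qed.

Definition prefix_monomial (u : nat) (e : 'I_n -> nat) : {mpoly C[n]} :=
  \prod_(k < n | (k < u)%N) 'X_k ^+ e k.

Lemma prefix_monomialS u e : prefix_monomial u.+1 e = 'X_u ^+ e u * prefix_monomial u e.
Proof.
rewrite /prefix_monomial (bigD1 u) //=; congr (_ * _); apply: eq_bigl => k.
by rewrite -(inj_eq val_inj) ltnS ltn_neqAle andbC.
Qed.

Lemma mul_prefix_monomial (u : nat) e t a : (t < u)%N ->
  'X_t ^+ a * prefix_monomial u e =
  prefix_monomial u (fun k => if k == t then (e k + a)%N else e k).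
Proof.
move=> tu; rewrite /prefix_monomial (bigD1 t) // [RHS](bigD1 t) //= eqxx exprD mulrA.
rewrite [_ * 'X_t ^+ e t]mulrC; congr (_ * _ * _); apply: eq_bigr => k /andP[_ kt].
by rewrite (negbTE kt).
Qed.

Lemma msym_prefix_monomial s (u : nat) e :
  (forall k, (k < u)%N -> s k = k) -> msym s (prefix_monomial u e) = prefix_monomial u e.
Proof.
move=> hs; rewrite /prefix_monomial rmorph_prod; apply: eq_bigr => k ku.
by rewrite /= msymXn hs.
Qed.

Lemma prefix_monomial_full (m : 'X_{1..n}) : 'X_[m] = prefix_monomial n (fun k => m k).
Proof. by rewrite mpolyXE_id /prefix_monomial; apply: eq_bigl => k; rewrite ltn_ord. Qed.

(* Moving the new factor at position t >= u back to position u is the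
   transposition (u t), which reorders no odd factor. *)
Lemma symmetrize_basisv_shift u t b e : (u <= t)%N ->
  (forall k, (u < k)%N -> b k = false) ->
  symmetrize (basisv (upd (upd b u false) t (b u))
                     ('X_t ^+ e u * prefix_monomial u e)) =
  symmetrize (basisv b (prefix_monomial u.+1 e)).
Proof.
move=> ut bu; rewrite -[RHS](symmetrize_basisv_perm (tperm u t)) tpermV.
rewrite koszul_sign_tperm_tail // scale1r prefix_monomialS.
congr (symmetrize (basisv _ _)).
  apply/ffunP => k; rewrite !ffunE.
  case: (tpermP u t k) => [->|->|/eqP e1 /eqP e2]; rewrite ?eqxx //.
    case: eqP => [<- //|/eqP tu]; apply/esym/bu.
    by move: tu ut; rewrite -(inj_eq val_inj) /=; lia.
  by rewrite (negbTE e2) (negbTE e1).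
rewrite msymM msymXn tpermL msym_prefix_monomial // => k ku.
by rewrite tpermD // -(inj_eq val_inj) /=; lia.
Qed.

Lemma act_symmetrize_cleared u b e : (forall k, (u < k)%N -> b k = false) ->
  let sg t : C := (-1) ^+ (parity_before (upd b u false) t * b u) in
  Defs.act (b u) false (e u) (symmetrize (basisv (upd b u false) (prefix_monomial u e))) =
  \sum_(t | (upd b u false t == false) && (t < u)%N)
     sg t *: symmetrize (basisv (upd (upd b u false) t (b u))
                                ('X_t ^+ e u * prefix_monomial u e)) +
  (#|[pred t : 'I_n | (u <= t)%N]|%:R * sg u) *:
     symmetrize (basisv b (prefix_monomial u.+1 e)).
Proof.
move=> bu sg; have b'u := upd_false_tail bu.
rewrite act_symmetrize_basisv (bigID (fun t => (t < u)%N)) /= addbF; congr (_ + _).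
rewrite -scalerA scaler_nat -sumr_const; apply: eq_big => t.
  by rewrite inE /= -leqNgt; case ut: (u <= t)%N; rewrite ?andbF // b'u.
case/andP=> _; rewrite -leqNgt => ut.
by rewrite /sg (parity_before_tail b'u ut) symmetrize_basisv_shift.
Qed.

Lemma symmetrize_basisv_gen (u : nat) b e : (u <= n)%N ->
  (forall k, (u <= k)%N -> b k = false) ->
  gen_submod (v1tensor C n) (symmetrize (basisv b (prefix_monomial u e))).
Proof.
elim: u b e => [|u IH] b e un bu.
  have -> : b = [ffun => false] by apply/ffunP => k; rewrite ffunE bu.
  rewrite /prefix_monomial big_pred0 // -[basisv _ _]/(v1tensor C n).
  rewrite symmetrize_invariant; last exact/symmetric_vec_perm_act/symmetric_vec_v1tensor.
  by apply/gen_submodZ/gen_base.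
pose uo := Ordinal un; have b'u := @upd_false_tail _ b uo bu.
have := @act_symmetrize_cleared uo b e bu.
rewrite /=; set c := (_%:R * _) => /esym /(canRL (addKr _)) E.
apply: (@gen_submodZK _ _ _ c); last first.
  rewrite E addrC; apply: gen_submodB; first exact/gen_act/IH/b'u/ltnW.
  apply: gen_submod_sum => t /andP[_ tu]; apply: gen_submodZ.
  rewrite mul_prefix_monomial //; apply: IH (ltnW un) _ => k uk; rewrite ffunE.
  by case: eqP => [kt|_]; [move: tu uk; rewrite kt; lia | apply: b'u].
rewrite mulf_neq0 ?signr_eq0 // pnatr_eq0 -lt0n.
by apply/card_gt0P; exists uo; rewrite inE /=.
Qed.

End SymmetricGroupAction.

Unset Implicit Arguments.
Theorem lemma3p10 (C : numClosedFieldType) (n : nat) (f : Vsp C n) :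
  symmetric_vec f <-> gen_submod (v1tensor C n) f.
Proof.
split => [f_sym | ]; last exact: gen_submod_symmetric.
have -> : f = (n`!%:R)^-1 *: symmetrize f.
  rewrite symmetrize_invariant; last exact: symmetric_vec_perm_act.
  by rewrite scalerA mulVf ?scale1r // pnatr_eq0 -lt0n fact_gt0.
apply: gen_submodZ; rewrite {1}(Vsp_basis_decomposition f) raddf_sum /=.
apply: gen_submod_sum => b _; rewrite raddf_sum /=; apply: gen_submod_sum => m _.
rewrite linearZ /= prefix_monomial_full; apply/gen_submodZ/symmetrize_basisv_gen => // k.
by rewrite leqNgt ltn_ord.
Qed.
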